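(* Consider the scoring two-player Tower of Hanoi game on three pegs with real weights $w_{12},w_{13},w_{23}$. (a) Let $n=2$. Consider the inequalities (1) $w_{12}+w_{23}-w_{13}>0$; (2) $3w_{13}-w_{12}-w_{23}>0$; (3) $w_{13}+w_{23}-w_{12}>0$; (4) $3w_{12}-w_{13}-w_{23}>0$; (5) $w_{12}+w_{13}-w_{23}>0$. Under (EC4) or (EC5), the first player wins if at least one of (1)–(5) holds. Under (EC2) or (EC3), the first player wins if (5) holds. Under (EC1) with final peg Peg 3, the first player wins if (1) or (2) holds. In all other cases the game is a draw. (b) Let $n=1$ (so (EC2), (EC3) are not applicable). Under (EC1) with final peg Peg 3, the first player wins if $w_{13}>0$, loses if $w_{13}<0$, and the game is a tie if $w_{13}=0$. Under (EC4) or (EC5), the second player wins if $w_{12}<0$ and $w_{13}<0$; the game is a tie if at least one of $w_{12},w_{13}$ equals $0$ and both are non-positive; otherwise the first player wins.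
   Context: Tower of Hanoi on three pegs (labeled 1, 2, 3) with $n$ disks of pairwise distinct sizes: a position assigns each disk to a peg, disks on each peg stacked with sizes decreasing from bottom to top. A legal move transfers the top disk of one peg to a different peg that is empty or has a larger top disk; a move from Peg $i$ to Peg $j$ or from Peg $j$ to Peg $i$ is a move along edge $\{i,j\}$. A tower position is one with all disks on one peg. Two-player game: Anh (first player) and Bao (second player) alternate moves starting from the position with all disks on Peg 1; a player may not move the disk that the opponent moved in the immediately preceding move. The game ends when the tower has been transferred to a final peg, according to one fixed ending condition: (EC1) all disks on a given peg distinct from Peg 1; (EC2) all disks on Peg 1, the largest disk having been moved at least once; (EC3) all disks on Peg 1, the smallest disk having been moved at least once; (EC4) all disks on any peg, the largest disk having been moved at least once; (EC5) all disks on any peg, the smallest disk having been moved at least once. A move creating a tower position that does not end the game (tower on a non-final peg) is not allowed; (EC2), (EC3) are not applicable for $n=1$. Scoring play: real weights $w_{12},w_{13},w_{23}$ are given (with $w_{ij}=w_{ji}$); a player making a move along edge $\{i,j\}$ earns $w_{ij}$ points. When the game ends, the player with strictly more points wins, and equal points is a tie. A player ''wins'' the game if she/he has a strategy forcing the game to end with her/his victory; if neither player can force the game to terminate in a victory for her/himself, the game is a draw. *)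

From HB Require Import structures.
From mathcomp Require Import all_boot all_order all_algebra.
Set Implicit Arguments. Unset Strict Implicit. Unset Printing Implicit Defensive.
Import Order.TTheory GRing.Theory Num.Theory.
Local Open Scope ring_scope.

(* Pegs 1,2,3 are represented by the ordinals 0,1,2 of 'I_3. *)
Definition peg := 'I_3.
Definition peg1 : peg := Ordinal (isT : (0 < 3)%N).
Definition peg2 : peg := Ordinal (isT : (1 < 3)%N).
Definition peg3 : peg := Ordinal (isT : (2 < 3)%N).

(* Disks are 'I_n; disk i has size i (0 = smallest, n-1 = largest).
   A configuration assigns each disk to a peg; the stacking order on a peg
   is determined by the sizes. *)
Definition config (n : nat) := {ffun 'I_n -> peg}.

(* weight of the edge {i,j} (for i <> j): sum of labels 0+1 -> w12,
   0+2 -> w13, 1+2 -> w23 *)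
Definition wt (R : realFieldType) (w12 w13 w23 : R) (i j : peg) : R :=
  match (val i + val j)%N with
  | 1%N => w12
  | 2%N => w13
  | _ => w23
  end.

Inductive ending := EC1 of peg | EC2 | EC3 | EC4 | EC5.

Definition tower_on n (c : config n) (p : peg) : Prop := forall d, c d = p.
Definition is_tower n (c : config n) : Prop := exists p, tower_on c p.

(* The game state: configuration, disk moved in the immediately preceding
   move (None at the start), whose turn it is (true = Anh), the score
   difference (Anh's points minus Bao's points), and whether the largest /
   smallest disk has been moved at least once. *)
Record state (R : realFieldType) (n : nat) := State {
  cfg : config n;
  last_moved : option 'I_n;
  anh_turn : bool;
  diff : R;
  movedL : bool;
  movedS : bool }.

Definition init_state (R : realFieldType) n : state R n :=
  State [ffun _ => peg1] None true 0 false false.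

Definition final (R : realFieldType) n (ec : ending) (s : state R n) : Prop :=
  match ec with
  | EC1 p => tower_on (cfg s) p
  | EC2 => tower_on (cfg s) peg1 /\ movedL s
  | EC3 => tower_on (cfg s) peg1 /\ movedS s
  | EC4 => is_tower (cfg s) /\ movedL s
  | EC5 => is_tower (cfg s) /\ movedS s
  end.

Definition move_cfg n (c : config n) (d : 'I_n) (t : peg) : config n :=
  [ffun e => if e == d then t else c e].

Definition step (R : realFieldType) (w12 w13 w23 : R) n (s : state R n)
  (d : 'I_n) (t : peg) : state R n :=
  let w := wt w12 w13 w23 (cfg s d) t in
  State (move_cfg (cfg s) d t) (Some d) (~~ anh_turn s)
    (if anh_turn s then diff s + w else diff s - w)
    (movedL s || (val d == n.-1)%N) (movedS s || (val d == 0)%N).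

Definition legal (R : realFieldType) (w12 w13 w23 : R) n (ec : ending)
  (s : state R n) (d : 'I_n) (t : peg) : Prop :=
  (* d is the top (smallest) disk of its peg *)
  (forall e, cfg s e = cfg s d -> (val d <= val e)%N) /\
  t <> cfg s d /\
  (forall e, cfg s e = t -> (val d < val e)%N) /\
  last_moved s <> Some d /\
  (is_tower (move_cfg (cfg s) d t) ->
     final ec (step w12 w13 w23 s d t)).

(* forces R n ec w12 w13 w23 P good s : the player P (true = Anh,
   false = Bao) has a strategy which, from state s, forces the game to end
   (in finitely many moves) in a final state whose score difference
   satisfies good.  (Inductive = attractor; the game is finitely branching.) *)
Inductive forces (R : realFieldType) (n : nat) (ec : ending) (w12 w13 w23 : R)
  (P : bool) (good : R -> Prop) : state R n -> Prop :=
| forces_mine s :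
    anh_turn s = P ->
    (exists d t, legal w12 w13 w23 ec s d t /\
       ((final ec (step w12 w13 w23 s d t) /\ good (diff (step w12 w13 w23 s d t))) \/
        (~ final ec (step w12 w13 w23 s d t) /\
         @forces R n ec w12 w13 w23 P good (step w12 w13 w23 s d t)))) ->
    @forces R n ec w12 w13 w23 P good s
| forces_theirs s :
    anh_turn s <> P ->
    (exists d t, legal w12 w13 w23 ec s d t) ->
    (forall d t, legal w12 w13 w23 ec s d t ->
       ((final ec (step w12 w13 w23 s d t) /\ good (diff (step w12 w13 w23 s d t))) \/
        (~ final ec (step w12 w13 w23 s d t) /\
         @forces R n ec w12 w13 w23 P good (step w12 w13 w23 s d t)))) ->
    @forces R n ec w12 w13 w23 P good s.

Definition wins (R : realFieldType) (n : nat) (ec : ending) (w12 w13 w23 : R)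
  (P : bool) : Prop :=
  @forces R n ec w12 w13 w23 P (fun x => if P then 0 < x else x < 0)
    (init_state R n).

Definition anh := true.
Definition bao := false.

Definition draw (R : realFieldType) (n : nat) (ec : ending) (w12 w13 w23 : R) : Prop :=
  ~ wins n ec w12 w13 w23 anh /\ ~ wins n ec w12 w13 w23 bao.

Definition tie (R : realFieldType) (n : nat) (ec : ending) (w12 w13 w23 : R) : Prop :=
  draw n ec w12 w13 w23 /\
  @forces R n ec w12 w13 w23 anh (fun x => 0 <= x) (init_state R n) /\
  @forces R n ec w12 w13 w23 bao (fun x => x <= 0) (init_state R n).

From HB Require Import structures.
From mathcomp Require Import all_boot all_order all_algebra ring lra.
Set Implicit Arguments. Unset Strict Implicit. Unset Printing Implicit Defensive.
Import Order.TTheory GRing.Theory Num.Theory.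
Local Open Scope ring_scope.

(* With one disk the game consists of a single move.  With two disks, since a
   player may not move the disk the opponent has just moved, Anh moves the small
   disk at every turn and Bao the big one, and Bao's move is always forced.  Only
   Anh can end the game, by putting the small disk onto the big one on a final
   peg; in between, her positions run around one of two 3-cycles on which the
   score difference is a function of the position.  So Anh wins iff one of the
   finitely many possible final differences is positive, and otherwise she can
   still circle forever, so that nobody wins. *)

Section Forcing.
Variables (R : realFieldType) (n : nat) (ec : ending) (w12 w13 w23 : R).
Variables (P : bool) (good : R -> Prop).

Local Notation legal := (legal w12 w13 w23 ec).
Local Notation step := (step w12 w13 w23).
Local Notation forces := (forces ec w12 w13 w23 P good).

Lemma final_tower (s : state R n) : final ec s -> is_tower (cfg s).
Proof.
by case: ec => [p| | | |] /=; [exists p | case=> ? _; exists peg1 ..| case | case].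
Qed.

Definition safe_move (S : state R n -> Prop) (s : state R n) d t :=
  (final ec (step s d t) -> ~ good (diff (step s d t))) /\
  (~ final ec (step s d t) -> S (step s d t)).

(* Staying in [S] forever does not count: [forces] is inductive, so [P] must
   end the game within finitely many moves. *)
Lemma not_forces_trap (S : state R n -> Prop) :
  (forall s, S s -> anh_turn s = P -> forall d t, legal s d t -> safe_move S s d t) ->
  (forall s, S s -> anh_turn s <> P -> exists d t, legal s d t /\ safe_move S s d t) ->
  forall s, S s -> ~ forces s.
Proof.
move=> mine theirs; rewrite /not; fix IH 3 => s Ss Fs.
destruct Fs as [s turn [d [t [Hl next]]] | s turn _ next].
- have [bad stay] := mine s Ss turn d t Hl.
  by case: next => [[fin g] | [nfin Fs']];
    [exact: bad fin g | exact: IH _ (stay nfin) Fs'].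
- have [d [t [Hl [bad stay]]]] := theirs s Ss turn.
  by case: (next d t Hl) => [[fin g] | [nfin Fs']];
    [exact: bad fin g | exact: IH _ (stay nfin) Fs'].
Qed.

Section LastMove.
Variable s : state R n.
Hypothesis last_move : forall d t, legal s d t -> final ec (step s d t).

Lemma forces_last_mine : anh_turn s = P ->
  forces s <-> exists d t, legal s d t /\ good (diff (step s d t)).
Proof.
move=> turn; split=> [Fs | [d [t [Hl g]]]].
  destruct Fs as [s' _ [d [t [Hl [[_ g] | [nfin _]]]]] | s' turn' _ _] => //.
  - by exists d, t.
  - by case: nfin; exact: last_move.
apply: forces_mine => //; exists d, t; split=> //.
by left; split=> //; exact: last_move.
Qed.

Lemma forces_last_theirs : anh_turn s <> P ->
  forces s <-> (exists d t, legal s d t) /\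
               (forall d t, legal s d t -> good (diff (step s d t))).
Proof.
move=> turn; split=> [Fs | [ex all]].
  destruct Fs as [s' turn' _ | s' _ ex next] => //; split=> // d t Hl.
  by case: (next d t Hl) => [[_ g] | [nfin _]] //; case: nfin; exact: last_move.
apply: forces_theirs => // d t Hl.
by left; split; [exact: last_move | exact: all].
Qed.

End LastMove.
End Forcing.

Lemma peg_cases (p : peg) : [\/ p = peg1, p = peg2 | p = peg3].
Proof.
by case: p => [[|[|[|//]]]] ?; [apply: Or31 | apply: Or32 | apply: Or33]; apply: val_inj.
Qed.

Definition third (a b : peg) : peg :=
  match (val a + val b)%N with 1%N => peg3 | 2%N => peg2 | _ => peg1 end.

Lemma thirdC (a b : peg) : third a b = third b a.
Proof. by rewrite /third addnC. Qed.

Lemma third_neq (a b : peg) : a <> b -> third a b <> a /\ third a b <> b.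
Proof. by case: (peg_cases a) => ->; case: (peg_cases b) => ->. Qed.

Lemma third_unique (a b t : peg) : a <> b -> t <> a -> t <> b -> t = third a b.
Proof.
by case: (peg_cases a) => ->; case: (peg_cases b) => ->; case: (peg_cases t) => ->.
Qed.

Lemma third_third (a b : peg) : a <> b -> third (third a b) b = a.
Proof. by case: (peg_cases a) => ->; case: (peg_cases b) => ->. Qed.

Lemma third_thirdl (a b : peg) : a <> b -> third (third a b) a = b.
Proof. by move=> ab; rewrite (thirdC a b) third_third // => /esym. Qed.

Definition small : 'I_2 := ord0.
Definition big : 'I_2 := ord_max.

Lemma disk2_cases (d : 'I_2) : d = small \/ d = big.
Proof. by case: d => [[|[|//]]] ?; [left | right]; apply: val_inj. Qed.

Definition pos (a b : peg) : config 2 := [ffun e => if e == small then a else b].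

Lemma pos_small (a b : peg) : pos a b small = a.
Proof. by rewrite ffunE. Qed.

Lemma pos_big (a b : peg) : pos a b big = b.
Proof. by rewrite ffunE. Qed.

Lemma move_small (a b t : peg) : move_cfg (pos a b) small t = pos t b.
Proof. by apply/ffunP => e; rewrite !ffunE; case: eqP. Qed.

Lemma move_big (a b t : peg) : move_cfg (pos a b) big t = pos a t.
Proof. by apply/ffunP => e; rewrite !ffunE; case: (disk2_cases e) => ->. Qed.

Lemma tower_posP (a b p : peg) : tower_on (pos a b) p <-> a = p /\ b = p.
Proof.
split=> [T | [<- <-]]; first by move: (T small) (T big); rewrite pos_small pos_big.
by move=> e; rewrite ffunE; case: ifP.
Qed.

Lemma is_tower_pos (a b : peg) : is_tower (pos a b) -> a = b.
Proof. by case=> p /tower_posP [-> ->]. Qed.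

Definition final_peg (ec : ending) (b : peg) : Prop :=
  match ec with EC1 p => b = p | EC2 | EC3 => b = peg1 | EC4 | EC5 => True end.

Section TwoDisks.
Variables (R : realFieldType) (w12 w13 w23 : R) (ec : ending).

Local Notation wt := (wt w12 w13 w23).
Local Notation legal := (legal w12 w13 w23 ec).
Local Notation step := (step w12 w13 w23).
Local Notation init := (init_state R 2).

Definition anh_state (a b : peg) (x : R) : state R 2 :=
  State (pos a b) (Some big) true x true true.

Definition bao_state (c b : peg) (movedL : bool) (x : R) : state R 2 :=
  State (pos c b) (Some small) false x movedL true.

Lemma cfg_init2 : cfg init = pos peg1 peg1.
Proof. by apply/ffunP => e; rewrite !ffunE; case: ifP. Qed.

Lemma final_anh_state (a b : peg) (x : R) : a <> b -> ~ final ec (anh_state a b x).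
Proof. by move=> ab /final_tower /is_tower_pos. Qed.

Lemma final_bao_state (c b : peg) movedL (x : R) : final ec (bao_state c b movedL x) -> c = b.
Proof. by move/final_tower/is_tower_pos. Qed.

Lemma final_towerP (b : peg) (x : R) : final ec (bao_state b b true x) <-> final_peg ec b.
Proof.
have T p : tower_on (pos b b) p <-> b = p.
  by split=> [/tower_posP [] | <-] //; apply/tower_posP.
have Tb : is_tower (pos b b) by exists b; apply/T.
case: ec => [p| | | |] /=; first exact: T.
1,2: by split=> [[/T]|/T].
1,2: by split.
Qed.

Lemma step_anh_state (a b t : peg) (x : R) :
  step (anh_state a b x) small t = bao_state t b true (x + wt a t).
Proof. by rewrite /step /= move_small pos_small. Qed.

Lemma step_bao_state (c b t : peg) movedL (x : R) :
  step (bao_state c b movedL x) big t = anh_state c t (x - wt b t).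
Proof. by rewrite /step /= move_big pos_big orbT. Qed.

Lemma step_init2 (t : peg) : step init small t = bao_state t peg1 false (wt peg1 t).
Proof. by rewrite /step cfg_init2 move_small pos_small /= add0r. Qed.

Lemma legal_anh_stateP (a b : peg) : a <> b -> forall (x : R) d t,
  legal (anh_state a b x) d t <-> [/\ d = small, t <> a & t = b -> final_peg ec b].
Proof.
move=> ab x d t; split=> [[_ [/= tnd [_ [last fin]]]] | [-> ta tb]].
  have ds : d = small by case: (disk2_cases d) => // db; case: last; rewrite db.
  subst d; rewrite pos_small in tnd; split=> // tb; subst t.
  apply/(final_towerP _ (x + wt a b)); rewrite -step_anh_state; apply: fin.
  by rewrite /= move_small; exists b; exact/tower_posP.
split=> //; split; first by rewrite /= pos_small.
split=> [e /= | ].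
  by case: (disk2_cases e) => ->; rewrite ?pos_small ?pos_big // => /esym.
split=> //; rewrite /= move_small step_anh_state => /is_tower_pos tb'.
by rewrite tb'; apply/final_towerP; exact: tb.
Qed.

Lemma legal_bao_stateP (c b : peg) : c <> b -> forall movedL (x : R) d t,
  legal (bao_state c b movedL x) d t <-> d = big /\ t = third c b.
Proof.
move=> cb movedL x d t; have [tc tb] := third_neq cb.
split=> [[_ [/= tnd [tgt [last _]]]] | [-> ->]].
  have db : d = big by case: (disk2_cases d) => // ds; case: last; rewrite ds.
  subst d; rewrite pos_big in tnd; split=> //.
  apply: third_unique => // tc'; move: (tgt small); rewrite pos_small.
  by move/(_ (esym tc')).
split=> [e /= | ].
  by case: (disk2_cases e) => ->; rewrite ?pos_small ?pos_big.
split; first by rewrite /= pos_big.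
split=> [e /= | ].
  by case: (disk2_cases e) => ->; rewrite ?pos_small ?pos_big // => /esym.
by split=> //; rewrite /= move_big => /is_tower_pos /esym.
Qed.

Lemma legal_init2P d t : legal init d t <-> d = small /\ t <> peg1.
Proof.
split=> [[top [tnd _]] | [-> tp]].
  have ds : d = small.
    case: (disk2_cases d) => // db; move: (top small).
    by rewrite db cfg_init2 pos_small pos_big => /(_ erefl).
  by subst d; rewrite cfg_init2 pos_small in tnd.
split=> [e _ | ]; first exact: leq0n.
split; first by rewrite cfg_init2 pos_small.
split=> [e | ].
  by rewrite cfg_init2; case: (disk2_cases e) => ->; rewrite ?pos_small ?pos_big // => /esym.
by split=> //; rewrite cfg_init2 move_small => /is_tower_pos.
Qed.

(* The score difference when Anh is to move with the small disk on [a] and the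
   big one on [b].  These positions run through the 3-cycles
   (2,3) -> (1,2) -> (3,1) and (3,2) -> (1,3) -> (2,1), along each of which the
   weight gains add up to zero, so the difference only depends on (a, b). *)
Definition anh_diff (a b : peg) : R :=
  match val a, val b with
  | 1%N, 2%N => w12 - w13
  | 0%N, 1%N => w12 + w12 - w13 - w23
  | 2%N, 0%N => w12 - w23
  | 2%N, 1%N => w13 - w12
  | 0%N, 2%N => w13 + w13 - w12 - w23
  | 1%N, 0%N => w13 - w23
  | _, _ => 0
  end.

Definition end_diff (a b : peg) : R := anh_diff a b + wt a b.

Lemma anh_diff_start (t : peg) : t <> peg1 ->
  wt peg1 t - wt peg1 (third t peg1) = anh_diff t (third t peg1).
Proof. by case: (peg_cases t) => -> // _; rewrite /wt /anh_diff /=; ring. Qed.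

Lemma anh_diff_rotate (a b : peg) : a <> b ->
  anh_diff a b + wt a (third a b) - wt b a = anh_diff (third a b) a.
Proof.
by case: (peg_cases a) => ->; case: (peg_cases b) => -> // _;
  rewrite /wt /anh_diff /=; ring.
Qed.

Definition reachable2 (s : state R 2) : Prop :=
  [\/ s = init,
      exists2 t, t <> peg1 & s = bao_state t peg1 false (wt peg1 t),
      exists a b, a <> b /\ s = anh_state a b (anh_diff a b)
    | exists a b, a <> b /\
        s = bao_state (third a b) b true (anh_diff a b + wt a (third a b))].

Lemma reachable2_step s d t : reachable2 s -> legal s d t ->
  (~ final ec (step s d t) /\ reachable2 (step s d t)) \/
  [/\ final ec (step s d t), anh_turn s &
      exists a b, [/\ a <> b, final_peg ec b & diff (step s d t) = end_diff a b]].
Proof.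
case=> [-> | [t0 t0p ->] | [a [b [ab ->]]] | [a [b [ab ->]]]].
- case/legal_init2P => -> tp; rewrite step_init2; left; split; last by apply: Or42; exists t.
  by move/final_bao_state.
- have [tt0 tp] := third_neq t0p.
  case/(legal_bao_stateP t0p) => -> ->; rewrite step_bao_state; left; split.
    by apply: final_anh_state => /esym.
  apply: Or43; exists t0, (third t0 peg1); rewrite anh_diff_start //.
  by split=> // /esym.
- case/(legal_anh_stateP ab) => -> ta tb; rewrite step_anh_state.
  have [tb' | ntb] := eqVneq t b.
    subst t; right; split=> //; first exact/final_towerP/tb.
    by exists a, b; split=> //; exact: tb.
  left; split; first by move/final_bao_state/eqP; rewrite (negbTE ntb).
  by apply: Or44; exists a, b; rewrite -(third_unique ab ta (elimN eqP ntb)).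
- have [ca cb] := third_neq ab.
  case/(legal_bao_stateP cb) => -> ->; rewrite step_bao_state third_third //.
  left; split; first exact: final_anh_state.
  by apply: Or43; exists (third a b), a; rewrite anh_diff_rotate.
Qed.

Lemma reachable2_bao_move s : reachable2 s -> ~~ anh_turn s -> exists d t, legal s d t.
Proof.
case=> [-> // | [t0 t0p ->] | [a [b [_ ->]]] // | [a [b [ab ->]]]] _.
  by exists big, (third t0 peg1); apply/(legal_bao_stateP t0p).
have [_ cb] := third_neq ab.
by exists big, (third (third a b) b); apply/(legal_bao_stateP cb).
Qed.

Lemma reachable2_delay s : reachable2 s -> anh_turn s ->
  exists d t, legal s d t /\ ~ final ec (step s d t).
Proof.
case=> [-> | [t0 _ ->] // | [a [b [ab ->]]] | [a [b [_ ->]]] //] _.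
  exists small, peg2; rewrite step_init2; split; last by move/final_bao_state.
  by apply/legal_init2P.
have [ca cb] := third_neq ab.
exists small, (third a b); rewrite step_anh_state; split; last by move/final_bao_state.
by apply/(legal_anh_stateP ab).
Qed.

Local Notation forces := (forces ec w12 w13 w23).

Lemma anh_not_forces2 (good : R -> Prop) :
  (forall a b, a <> b -> final_peg ec b -> ~ good (end_diff a b)) ->
  ~ forces anh good init.
Proof.
move=> bad; apply: (not_forces_trap (S := reachable2)); last exact: Or41.
  move=> s Ss _ d t /(reachable2_step Ss) [[nfin Ss'] | [fin _ [a [b [ab fb E]]]]].
    by split.
  by split=> // _; rewrite E; exact: bad.
move=> s Ss /negP turn; have [d [t Hl]] := reachable2_bao_move Ss turn.
exists d, t; split=> //.
case: (reachable2_step Ss Hl) => [[nfin Ss'] | [_ turn' _]]; first by split.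
by rewrite turn' in turn.
Qed.

Lemma bao_not_forces2 (good : R -> Prop) : ~ forces bao good init.
Proof.
apply: (not_forces_trap (S := reachable2)); last exact: Or41.
  move=> s Ss turn d t /(reachable2_step Ss) [[nfin Ss'] | [_ turn' _]]; first by split.
  by rewrite turn in turn'.
move=> s Ss turn; have {}turn : anh_turn s by case: (anh_turn s) turn.
have [d [t [Hl nfin]]] := reachable2_delay Ss turn.
exists d, t; split=> //.
by case: (reachable2_step Ss Hl) => [[_ Ss'] | [fin _ _]] //; split.
Qed.

Lemma forces_anh_rotate (good : R -> Prop) (a b : peg) : a <> b ->
  (final_peg ec b /\ good (end_diff a b)) \/
    forces anh good (anh_state (third a b) a (anh_diff (third a b) a)) ->
  forces anh good (anh_state a b (anh_diff a b)).
Proof.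
move=> ab; have [ca cb] := third_neq ab.
case=> [[fb g] | Fc].
  apply: forces_mine => //; exists small, b; split.
    by apply/(legal_anh_stateP ab); split=> // /esym.
  by left; rewrite step_anh_state; split=> //; exact/final_towerP.
apply: forces_mine => //; exists small, (third a b); split.
  by apply/(legal_anh_stateP ab).
right; rewrite step_anh_state; split; first by move/final_bao_state.
apply: forces_theirs => //.
  by exists big, (third (third a b) b); apply/(legal_bao_stateP cb).
move=> d t /(legal_bao_stateP cb) [-> ->]; right.
rewrite step_bao_state third_third // anh_diff_rotate //.
by split=> //; exact: final_anh_state.
Qed.

Lemma forces_anh_cycle (good : R -> Prop) (a b : peg) : a <> b ->
  [\/ final_peg ec b /\ good (end_diff a b),
      final_peg ec a /\ good (end_diff (third a b) a)
    | final_peg ec (third a b) /\ good (end_diff b (third a b))] ->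
  forces anh good (anh_state a b (anh_diff a b)).
Proof.
move=> ab; have [ca cb] := third_neq ab.
have bc : b <> third a b by move/esym.
case=> [g | g | g]; apply: forces_anh_rotate => //; [by left | right..].
  by apply: forces_anh_rotate => //; left.
apply: forces_anh_rotate => //; right; rewrite third_thirdl //.
by apply: forces_anh_rotate => //; left.
Qed.

Lemma forces_anh_start (good : R -> Prop) (t : peg) : t <> peg1 ->
  forces anh good (anh_state t (third t peg1) (anh_diff t (third t peg1))) ->
  forces anh good init.
Proof.
move=> tp Ft; have [ct cp] := third_neq tp.
apply: forces_mine => //; exists small, t; split; first exact/legal_init2P.
right; rewrite step_init2; split; first by move/final_bao_state.
apply: forces_theirs => //.
  by exists big, (third t peg1); apply/(legal_bao_stateP tp).
move=> d t' /(legal_bao_stateP tp) [-> ->]; right.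
rewrite step_bao_state anh_diff_start //.
by split=> //; apply: final_anh_state => /esym.
Qed.

Lemma anh_forces2 (good : R -> Prop) :
  (exists a b, [/\ a <> b, final_peg ec b & good (end_diff a b)]) ->
  forces anh good init.
Proof.
case=> a [b [ab fb g]].
have S2 := @forces_anh_start good peg2 ltac:(by []).
have S3 := @forces_anh_start good peg3 ltac:(by []).
have C2 := @forces_anh_cycle good peg2 peg3 ltac:(by []).
have C3 := @forces_anh_cycle good peg3 peg2 ltac:(by []).
by case: (peg_cases a) ab fb g => ->; case: (peg_cases b) => -> // _ fb g;
  [apply/S2/C2/Or32 | apply/S3/C3/Or32 | apply/S3/C3/Or33
  | apply/S2/C2/Or31 | apply/S2/C2/Or33 | apply/S3/C3/Or31].
Qed.

Lemma exists_end_diffP (F : peg -> Prop) (good : R -> Prop) :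
  (exists a b, [/\ a <> b, F b & good (end_diff a b)]) <->
  (F peg3 /\ (good (w12 + w23 - w13) \/ good (3%:R * w13 - w12 - w23))) \/
  (F peg2 /\ (good (w13 + w23 - w12) \/ good (3%:R * w12 - w13 - w23))) \/
  (F peg1 /\ good (w12 + w13 - w23)).
Proof.
have [E23 E13 E32 E12] : [/\ end_diff peg2 peg3 = w12 + w23 - w13,
    end_diff peg1 peg3 = 3%:R * w13 - w12 - w23,
    end_diff peg3 peg2 = w13 + w23 - w12 &
    end_diff peg1 peg2 = 3%:R * w12 - w13 - w23].
  by split; rewrite /end_diff /anh_diff /wt /=; ring.
have [E21 E31] :
    end_diff peg2 peg1 = w12 + w13 - w23 /\ end_diff peg3 peg1 = w12 + w13 - w23.
  by split; rewrite /end_diff /anh_diff /wt /=; ring.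
split=> [[a [b [ab Fb g]]] | ].
  case: (peg_cases a) ab g => ->; case: (peg_cases b) Fb => -> // Fb _;
  rewrite ?E23 ?E13 ?E32 ?E12 ?E21 ?E31; tauto.
case=> [[F3 [g | g]] | [[F2 [g | g]] | [F1 g]]];
  [exists peg2, peg3 | exists peg1, peg3 | exists peg3, peg2 | exists peg1, peg2
  | exists peg2, peg1];
  by split; rewrite ?E23 ?E13 ?E32 ?E12 ?E21.
Qed.

End TwoDisks.

Section OneDisk.
Variables (R : realFieldType) (w12 w13 w23 : R).

Local Notation init := (init_state R 1).
Local Notation step := (step w12 w13 w23).

Lemma move_init1 d t : move_cfg (cfg init) d t = [ffun => t].
Proof. by apply/ffunP => e; rewrite !ffunE !ord1 eqxx. Qed.

Lemma diff_step_init1 d t : diff (step init d t) = wt w12 w13 w23 peg1 t.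
Proof. by rewrite /= ffunE add0r. Qed.

Lemma final_step_init1_EC1 (p : peg) d t : final (EC1 p) (step init d t) <-> t = p.
Proof.
rewrite /final [cfg _]move_init1; split=> [/(_ d) | -> e]; by rewrite ffunE.
Qed.

Lemma final_step_init1_tower ec d t :
  ec = EC4 \/ ec = EC5 -> final ec (step init d t).
Proof.
have T : is_tower (cfg (step init d t)) by exists t => e; rewrite [cfg _]move_init1 ffunE.
by case=> ->; split; rewrite // /= ?ord1.
Qed.

Section Ending.
Variable ec : ending.
Local Notation legal := (legal w12 w13 w23 ec).
Local Notation forces := (forces ec w12 w13 w23).

Lemma legal_init1P d t : legal init d t <-> t <> peg1 /\ final ec (step init d t).
Proof.
split=> [[_ [tnd [_ [_ fin]]]] | [tp fin]].
  rewrite /= ffunE in tnd; split=> //; apply: fin.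
  by rewrite move_init1; exists t => e; rewrite ffunE.
split=> [e _ | ]; first by rewrite !ord1.
split; first by rewrite /= ffunE.
by split=> // e; rewrite /= ffunE => /esym.
Qed.

Lemma legal_init1_final d t : legal init d t -> final ec (step init d t).
Proof. by case/legal_init1P. Qed.

Lemma anh_forces1P (good : R -> Prop) :
  forces anh good init <->
  exists2 t, t <> peg1 /\ final ec (step init ord0 t) & good (wt w12 w13 w23 peg1 t).
Proof.
have [Fin Fout] := forces_last_mine good legal_init1_final (erefl : anh_turn init = anh).
split=> [/Fin [d [t [/legal_init1P Ht g]]] | [t Ht g]].
  by rewrite (ord1 d) diff_step_init1 in Ht g; exists t.
by apply: Fout; exists ord0, t; split; [exact/legal_init1P | rewrite diff_step_init1].
Qed.

Lemma bao_forces1P (good : R -> Prop) :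
  forces bao good init <->
  (exists t, t <> peg1 /\ final ec (step init ord0 t)) /\
  (forall t, t <> peg1 -> final ec (step init ord0 t) -> good (wt w12 w13 w23 peg1 t)).
Proof.
have turn : anh_turn init <> bao by [].
have [Fin Fout] := forces_last_theirs good legal_init1_final turn.
split=> [/Fin [[d [t /legal_init1P Ht]] all] | [[t Ht] all]].
  split; first by rewrite (ord1 d) in Ht; exists t.
  by move=> t' tp fin; rewrite -(diff_step_init1 ord0); apply/all/legal_init1P.
apply: Fout; split; first by exists ord0, t; apply/legal_init1P.
move=> d t' /legal_init1P [tp fin].
by rewrite diff_step_init1; apply: all; rewrite (ord1 d) in fin.
Qed.
End Ending.

Lemma anh_forces1_EC1 (good : R -> Prop) :
  forces (EC1 peg3) w12 w13 w23 anh good init <-> good w13.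
Proof.
split=> [/anh_forces1P [t [_ /final_step_init1_EC1 ->]] // | g].
by apply/anh_forces1P; exists peg3 => //; split=> //; exact/final_step_init1_EC1.
Qed.

Lemma bao_forces1_EC1 (good : R -> Prop) :
  forces (EC1 peg3) w12 w13 w23 bao good init <-> good w13.
Proof.
split=> [/bao_forces1P [_ all] | g].
  by apply: (all peg3) => //; exact/final_step_init1_EC1.
apply/bao_forces1P; split; first by exists peg3; split=> //; exact/final_step_init1_EC1.
by move=> t _ /final_step_init1_EC1 ->.
Qed.

Section TowerEnding.
Variable ec : ending.
Hypothesis ec_tower : ec = EC4 \/ ec = EC5.

Lemma anh_forces1_tower (good : R -> Prop) :
  forces ec w12 w13 w23 anh good init <-> good w12 \/ good w13.
Proof.
have fin t := final_step_init1_tower ord0 t ec_tower.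
split=> [/anh_forces1P [t [tp _]] | [g | g]].
  by case: (peg_cases t) tp => -> // _ g; [left | right].
- by apply/anh_forces1P; exists peg2.
- by apply/anh_forces1P; exists peg3.
Qed.

Lemma bao_forces1_tower (good : R -> Prop) :
  forces ec w12 w13 w23 bao good init <-> good w12 /\ good w13.
Proof.
have fin t := final_step_init1_tower ord0 t ec_tower.
split=> [/bao_forces1P [_ all] | [g2 g3]].
  by split; [exact: (all peg2) | exact: (all peg3)].
apply/bao_forces1P; split; first by exists peg2.
by move=> t tp _; case: (peg_cases t) tp => ->.
Qed.
End TowerEnding.
End OneDisk.

Lemma two_disks_outcome (R : realFieldType) (w12 w13 w23 : R) (ec : ending) :
  let anh_wins :=
    (final_peg ec peg3 /\ (0 < w12 + w23 - w13 \/ 0 < 3%:R * w13 - w12 - w23)) \/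
    (final_peg ec peg2 /\ (0 < w13 + w23 - w12 \/ 0 < 3%:R * w12 - w13 - w23)) \/
    (final_peg ec peg1 /\ 0 < w12 + w13 - w23) in
  (anh_wins -> wins 2 ec w12 w13 w23 anh) /\ (~ anh_wins -> draw 2 ec w12 w13 w23).
Proof.
have E := exists_end_diffP w12 w13 w23 (final_peg ec) (fun x => 0 < x).
split=> [W | noW]; first by apply: anh_forces2; exact/E.
split; last exact: bao_not_forces2.
by apply: anh_not_forces2 => a b ab fb g; apply/noW/E; exists a, b.
Qed.

Lemma one_disk_outcome_EC1 (R : realFieldType) (w12 w13 w23 : R) :
  [/\ 0 < w13 -> wins 1 (EC1 peg3) w12 w13 w23 anh,
      w13 < 0 -> wins 1 (EC1 peg3) w12 w13 w23 bao &
      w13 = 0 -> tie 1 (EC1 peg3) w12 w13 w23].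
Proof.
split=> h; [exact/anh_forces1_EC1 | exact/bao_forces1_EC1 | split; [split | split]].
- by move/anh_forces1_EC1 => /=; lra.
- by move/bao_forces1_EC1 => /=; lra.
- by apply/anh_forces1_EC1 => /=; lra.
- by apply/bao_forces1_EC1 => /=; lra.
Qed.

Lemma one_disk_outcome_tower (R : realFieldType) (w12 w13 w23 : R) (ec : ending) :
  ec = EC4 \/ ec = EC5 ->
  [/\ w12 < 0 /\ w13 < 0 -> wins 1 ec w12 w13 w23 bao,
      (w12 = 0 \/ w13 = 0) /\ w12 <= 0 /\ w13 <= 0 -> tie 1 ec w12 w13 w23 &
      ~ (w12 < 0 /\ w13 < 0) -> ~ ((w12 = 0 \/ w13 = 0) /\ w12 <= 0 /\ w13 <= 0) ->
      wins 1 ec w12 w13 w23 anh].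
Proof.
move=> ec45; have Fa := anh_forces1_tower w12 w13 w23 ec45.
have Fb := bao_forces1_tower w12 w13 w23 ec45.
split=> [neg | [hz [h12 h13]] | H1 H2]; first exact/Fb.
  split; [split | split].
  - by case/Fa => /=; lra.
  - by case/Fb => /=; case: hz; lra.
  - by apply/Fa => /=; lra.
  - by apply/Fb => /=; split.
apply/Fa => /=; have [w12p | w12n] := ltrP 0 w12; first by left.
have [w13p | w13n] := ltrP 0 w13; first by right.
exfalso; have [w12z | w12z] := eqVneq w12 0; first by apply: H2; split; [left | split].
have [w13z | w13z] := eqVneq w13 0; first by apply: H2; split; [right | split].
by apply: H1; rewrite !lt_neqAle w12z w13z w12n w13n.
Qed.

Theorem theorem3 (R : realFieldType) (w12 w13 w23 : R) :
  (* (a) n = 2 *)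
  (let c1 := 0 < w12 + w23 - w13 in
   let c2 := 0 < 3%:R * w13 - w12 - w23 in
   let c3 := 0 < w13 + w23 - w12 in
   let c4 := 0 < 3%:R * w12 - w13 - w23 in
   let c5 := 0 < w12 + w13 - w23 in
   (forall ec, ec = EC4 \/ ec = EC5 ->
      ((c1 \/ c2 \/ c3 \/ c4 \/ c5) -> wins 2 ec w12 w13 w23 anh) /\
      (~ (c1 \/ c2 \/ c3 \/ c4 \/ c5) -> draw 2 ec w12 w13 w23)) /\
   (forall ec, ec = EC2 \/ ec = EC3 ->
      (c5 -> wins 2 ec w12 w13 w23 anh) /\
      (~ c5 -> draw 2 ec w12 w13 w23)) /\
   ((c1 \/ c2 -> wins 2 (EC1 peg3) w12 w13 w23 anh) /\
    (~ (c1 \/ c2) -> draw 2 (EC1 peg3) w12 w13 w23))) /\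
  (* (b) n = 1 *)
  (((0 < w13 -> wins 1 (EC1 peg3) w12 w13 w23 anh) /\
    (w13 < 0 -> wins 1 (EC1 peg3) w12 w13 w23 bao) /\
    (w13 = 0 -> tie 1 (EC1 peg3) w12 w13 w23)) /\
   (forall ec, ec = EC4 \/ ec = EC5 ->
      (w12 < 0 /\ w13 < 0 -> wins 1 ec w12 w13 w23 bao) /\
      ((w12 = 0 \/ w13 = 0) /\ w12 <= 0 /\ w13 <= 0 -> tie 1 ec w12 w13 w23) /\
      (~ (w12 < 0 /\ w13 < 0) ->
       ~ ((w12 = 0 \/ w13 = 0) /\ w12 <= 0 /\ w13 <= 0) ->
       wins 1 ec w12 w13 w23 anh))).
Proof.
cbv zeta; split; last first.
  split; first by have [] := one_disk_outcome_EC1 w12 w13 w23.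
  by move=> ec ec45; have [] := one_disk_outcome_tower w12 w13 w23 ec45.
have n21 : peg2 <> peg1 by []; have n31 : peg3 <> peg1 by [].
have n13 : peg1 <> peg3 by []; have n23 : peg2 <> peg3 by [].
split; [|split].
- move=> ec ec45; have [W D] := two_disks_outcome w12 w13 w23 ec.
  by split=> H; [apply: W | apply: D]; case: ec45 => ?; subst ec => /=; tauto.
- move=> ec ec23; have [W D] := two_disks_outcome w12 w13 w23 ec.
  by split=> H; [apply: W | apply: D]; case: ec23 => ?; subst ec => /=; intuition.
- have [W D] := two_disks_outcome w12 w13 w23 (EC1 peg3).
  by split=> H; [apply: W | apply: D] => /=; intuition.
Qed.
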